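(* Regard spinors as vectors in the 4-dimensional Euclidean space $(\mathrm{Cl}^+(3),(\cdot,\cdot))$ and let $I=e_1e_2e_3$. Then: (i) $\{a_1a_1=1,\ a_1a_2,\ a_1I,\ a_2I\}$ is a set of simple roots of a root system of type $A_2\oplus A_2$ contained in the $H_4$ root system $2I$; (ii) $\{a_1a_1=1,\ a_2a_3,\ a_2I,\ a_3I\}$ is a set of simple roots of a root system of type $H_2\oplus H_2$ contained in $2I$; (iii) $\{a_1a_1,\ a_1a_2,\ a_1a_3a_2a_1a_3a_2a_1a_3,\ a_3a_2a_1a_3a_2a_1a_3a_2a_3a_1a_2a_3\}$ is a set of simple roots of a root system of type $A_4$ contained in $2I$. (A set of simple roots of a given type means its Cartan matrix $A_{ij}=2(\beta_i,\beta_j)/(\beta_i,\beta_i)$ is that of the given type and the root system generated from it by the reflections $s_R(X)=-R\tilde XR$ lies in $2I$.)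
   Context: $\mathrm{Cl}(3)$ is the real Clifford algebra of Euclidean $\mathbb{R}^3$ with orthonormal basis $e_1,e_2,e_3$ ($e_i^2=1$, $e_ie_j=-e_je_i$ for $i\neq j$); all products are geometric products. The even subalgebra $\mathrm{Cl}^+(3)$ is spanned by $1,e_2e_3,e_3e_1,e_1e_2$ (spinors). Reversal $\tilde{\ }$ reverses the order of vector factors. The spinor inner product $(R_1,R_2)=\tfrac12(R_1\tilde R_2+R_2\tilde R_1)$ makes $\mathrm{Cl}^+(3)$ a 4D Euclidean space with orthonormal basis $1,e_2e_3,e_3e_1,e_1e_2$; for unit $R$, $s_R(X)=X-2(R,X)R=-R\tilde XR$. Let $\tau=\frac{1+\sqrt5}{2}$. The $H_3$ simple roots are $a_1=e_2$, $a_2=\tfrac12(-\tau e_1-e_2-(\tau-1)e_3)$, $a_3=e_1$. The binary icosahedral group $2I$ is the set of all products of an even number of factors from $\{a_1,a_2,a_3\}$ (order 120); as 120 vectors in the 4D spinor space it is the $H_4$ root system. Cartan matrices: $A_2\oplus A_2$ is block diagonal with two blocks $\begin{pmatrix}2&-1\\-1&2\end{pmatrix}$; $H_2\oplus H_2$ is block diagonal with two blocks $\begin{pmatrix}2&-\tau\\-\tau&2\end{pmatrix}$; $A_4$ is the $4\times4$ tridiagonal matrix with $2$ on the diagonal and $-1$ on the off-diagonals (up to ordering of simple roots). *)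

From HB Require Import structures.
From mathcomp Require Import all_boot all_order all_algebra all_fingroup.
Set Implicit Arguments. Unset Strict Implicit. Unset Printing Implicit Defensive.
Import Order.TTheory GRing.Theory Num.Theory.
Local Open Scope ring_scope.

(* The real Clifford algebra Cl(3) of Euclidean R^3 with coefficients in a
   ring R (we use a real closed field R, e.g. the reals). *)
Record cl (R : Type) := Cl {
  cs : R; c1 : R; c2 : R; c3 : R; c23 : R; c31 : R; c12 : R; c123 : R }.

Section Clifford.
Variable R : comNzRingType.

Definition cl_one : cl R := Cl 1 0 0 0 0 0 0 0.
Definition cl_e1 : cl R := Cl 0 1 0 0 0 0 0 0.
Definition cl_e2 : cl R := Cl 0 0 1 0 0 0 0 0.
Definition cl_e3 : cl R := Cl 0 0 0 1 0 0 0 0.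
Definition cl_I : cl R := Cl 0 0 0 0 0 0 0 1.

Definition cl_vec (x1 x2 x3 : R) : cl R := Cl 0 x1 x2 x3 0 0 0 0.

Definition cl_opp (x : cl R) : cl R :=
  Cl (- cs x) (- c1 x) (- c2 x) (- c3 x) (- c23 x) (- c31 x) (- c12 x) (- c123 x).

(* Geometric product, from e_i^2 = 1 and e_i e_j = - e_j e_i (i <> j). *)
Definition cl_mul (x y : cl R) : cl R := Cl
  (cs x * cs y + c1 x * c1 y + c2 x * c2 y + c3 x * c3 y
   - c23 x * c23 y - c31 x * c31 y - c12 x * c12 y - c123 x * c123 y)
  (cs x * c1 y + c1 x * cs y - c2 x * c12 y + c3 x * c31 y
   - c23 x * c123 y - c31 x * c3 y + c12 x * c2 y - c123 x * c23 y)
  (cs x * c2 y + c1 x * c12 y + c2 x * cs y - c3 x * c23 y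
   + c23 x * c3 y - c31 x * c123 y - c12 x * c1 y - c123 x * c31 y)
  (cs x * c3 y - c1 x * c31 y + c2 x * c23 y + c3 x * cs y
   - c23 x * c2 y + c31 x * c1 y - c12 x * c123 y - c123 x * c12 y)
  (cs x * c23 y + c1 x * c123 y + c2 x * c3 y - c3 x * c2 y
   + c23 x * cs y - c31 x * c12 y + c12 x * c31 y + c123 x * c1 y)
  (cs x * c31 y - c1 x * c3 y + c2 x * c123 y + c3 x * c1 y
   + c23 x * c12 y + c31 x * cs y - c12 x * c23 y + c123 x * c2 y)
  (cs x * c12 y + c1 x * c2 y - c2 x * c1 y + c3 x * c123 y
   - c23 x * c31 y + c31 x * c23 y + c12 x * cs y + c123 x * c3 y)
  (cs x * c123 y + c1 x * c23 y + c2 x * c31 y + c3 x * c12 y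
   + c23 x * c1 y + c31 x * c2 y + c12 x * c3 y + c123 x * cs y).

(* Reversal: reverses the order of vector factors; it fixes grades 0,1
   and negates grades 2,3. *)
Definition cl_rev (x : cl R) : cl R :=
  Cl (cs x) (c1 x) (c2 x) (c3 x) (- c23 x) (- c31 x) (- c12 x) (- c123 x).

End Clifford.

Notation "x *c y" := (cl_mul x y) (at level 40, left associativity).

Section Spinors.
Variable R : rcfType.

Definition tau : R := (1 + Num.sqrt 5) / 2.

(* H3 simple roots. *)
Definition a1 : cl R := cl_vec 0 1 0.
Definition a2 : cl R := cl_vec (- tau / 2) (- 1 / 2) (- (tau - 1) / 2).
Definition a3 : cl R := cl_vec 1 0 0.
Definition aH3 (i : 'I_3) : cl R := tnth [tuple a1; a2; a3] i.

(* The binary icosahedral group 2I: all products of an even number of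
   factors from {a1, a2, a3} (the empty product being 1). *)
Inductive in2I : cl R -> Prop :=
  | in2I_one : in2I (cl_one R)
  | in2I_step (i j : 'I_3) (x : cl R) : in2I x -> in2I (aH3 i *c aH3 j *c x).

(* Spinor inner product (R1,R2) = 1/2 (R1 ~R2 + R2 ~R1), a scalar: we take
   the scalar (grade 0) coefficient. *)
Definition spinor_ip (x y : cl R) : R :=
  cs (x *c cl_rev y) / 2 + cs (y *c cl_rev x) / 2.

Definition srefl (r x : cl R) : cl R := cl_opp (r *c cl_rev x *c r).

Definition cartan (b : 'I_4 -> cl R) : 'M[R]_4 :=
  \matrix_(i < 4, j < 4) (2 * spinor_ip (b i) (b j) / spinor_ip (b i) (b i)).

Inductive gen_roots (b : 'I_4 -> cl R) : cl R -> Prop :=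
  | gen_base (i : 'I_4) : gen_roots b (b i)
  | gen_refl (i : 'I_4) (x : cl R) : gen_roots b x -> gen_roots b (srefl (b i) x).

(* b is a set of simple roots of type with Cartan matrix C (up to ordering
   of the simple roots), generating a root system contained in 2I. *)
Definition simple_system_in_2I (b : 'I_4 -> cl R) (C : 'M[R]_4) : Prop :=
  (exists s : 'S_4, cartan (fun i => b (s i)) = C) /\
  (forall x, gen_roots b x -> in2I x).

Definition four (x0 x1 x2 x3 : cl R) (i : 'I_4) : cl R :=
  tnth [tuple x0; x1; x2; x3] i.

Definition cartan_A2A2 : 'M[R]_4 := \matrix_(i < 4, j < 4)
  (if i == j then 2
   else if [|| (i == 0 :> nat) && (j == 1 :> nat), (i == 1 :> nat) && (j == 0 :> nat),
               (i == 2 :> nat) && (j == 3 :> nat) | (i == 3 :> nat) && (j == 2 :> nat)]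
        then -1 else 0).

Definition cartan_H2H2 : 'M[R]_4 := \matrix_(i < 4, j < 4)
  (if i == j then 2
   else if [|| (i == 0 :> nat) && (j == 1 :> nat), (i == 1 :> nat) && (j == 0 :> nat),
               (i == 2 :> nat) && (j == 3 :> nat) | (i == 3 :> nat) && (j == 2 :> nat)]
        then - tau else 0).

Definition cartan_A4 : 'M[R]_4 := \matrix_(i < 4, j < 4)
  (if i == j then 2
   else if (i.+1 == j :> nat) || (j.+1 == i :> nat) then -1 else 0).

End Spinors.

From HB Require Import structures.
From mathcomp Require Import all_boot all_order all_algebra all_fingroup.
From mathcomp Require Import ring.

(* Every spinor involved has coordinates in Q(tau), so all the needed identities
   are decided by exact computation in Q(tau) and transported to R along the
   ring morphism Q(tau) -> R.  For unit spinors the Cartan matrix is just the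
   table of doubled inner products 2 (b_i, b_j).  The group 2I is closed under
   products and reversion and contains -1 = (a1 a3)^2, hence under every
   reflection s_r with r in 2I; so the generated root system lies in 2I as soon
   as the simple roots do, which is certified by writing each of them as a
   product of pairs of H3 roots. *)

Set Implicit Arguments. Unset Strict Implicit. Unset Printing Implicit Defensive.
Import Order.TTheory GRing.Theory Num.Theory.
Local Open Scope ring_scope.

Section CliffordRing.
Variable R : comNzRingType.

Lemma cl_mulA : associative (@cl_mul R).
Proof.
by case=> ????????; case=> ????????; case=> ????????; rewrite /cl_mul /=; congr Cl; ring.
Qed.

Lemma cl_mul1r : left_id (cl_one R) (@cl_mul R).
Proof. by case=> ????????; rewrite /cl_mul /=; congr Cl; ring. Qed.

Lemma cl_mulr1 : right_id (cl_one R) (@cl_mul R).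
Proof. by case=> ????????; rewrite /cl_mul /=; congr Cl; ring. Qed.

Lemma cl_mulN1r (x : cl R) : cl_opp (cl_one R) *c x = cl_opp x.
Proof. by case: x => ????????; rewrite /cl_mul /cl_opp /=; congr Cl; ring. Qed.

Lemma cl_revM (x y : cl R) : cl_rev (x *c y) = cl_rev y *c cl_rev x.
Proof.
by case: x => ????????; case: y => ????????; rewrite /cl_mul /cl_rev /=; congr Cl; ring.
Qed.

Lemma cl_rev_vec (x1 x2 x3 : R) : cl_rev (cl_vec x1 x2 x3) = cl_vec x1 x2 x3.
Proof. by rewrite /cl_rev /cl_vec /= oppr0. Qed.

(* Twice the spinor inner product, so that no division by 2 is needed. *)
Definition cl_dot2 (x y : cl R) : R := cs (x *c cl_rev y) + cs (y *c cl_rev x).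

End CliffordRing.

Definition cl_coords (T : Type) (x : cl T) :=
  (cs x, c1 x, c2 x, c3 x, c23 x, c31 x, c12 x, c123 x).

Definition cl_of_coords (T : Type) (p : T * T * T * T * T * T * T * T) : cl T :=
  let: (a, b, c, d, e, f, g, h) := p in Cl a b c d e f g h.

Lemma cl_coordsK (T : Type) : cancel (@cl_coords T) (@cl_of_coords T).
Proof. by case. Qed.

HB.instance Definition _ (T : eqType) :=
  Equality.copy (cl T) (can_type (@cl_coordsK T)).

Definition map_cl (T U : Type) (f : T -> U) (x : cl T) : cl U :=
  Cl (f (cs x)) (f (c1 x)) (f (c2 x)) (f (c3 x))
     (f (c23 x)) (f (c31 x)) (f (c12 x)) (f (c123 x)).

Section MapClifford.
Variables (R S : comNzRingType) (f : {rmorphism R -> S}).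

Lemma map_clM (x y : cl R) : map_cl f (x *c y) = map_cl f x *c map_cl f y.
Proof. by rewrite /map_cl /cl_mul /= !(rmorphB, rmorphD, rmorphM). Qed.

Lemma map_cl_rev (x : cl R) : map_cl f (cl_rev x) = cl_rev (map_cl f x).
Proof. by rewrite /map_cl /cl_rev /= !rmorphN. Qed.

Lemma map_clN (x : cl R) : map_cl f (cl_opp x) = cl_opp (map_cl f x).
Proof. by rewrite /map_cl /cl_opp /= !rmorphN. Qed.

Lemma map_cl1 : map_cl f (cl_one R) = cl_one S.
Proof. by rewrite /map_cl /cl_one /= rmorph0 rmorph1. Qed.

Lemma map_cl_dot2 (x y : cl R) : f (cl_dot2 x y) = cl_dot2 (map_cl f x) (map_cl f y).
Proof. by rewrite /cl_dot2 rmorphD -!map_cl_rev -!map_clM. Qed.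

End MapClifford.

(* (a, b) stands for a + b tau, with tau ^+ 2 = tau + 1. *)
Definition qtau := (rat * rat)%type.
HB.instance Definition _ := GRing.Zmodule.copy qtau (rat * rat)%type.

Definition qtau_mul (x y : qtau) : qtau :=
  (x.1 * y.1 + x.2 * y.2, x.1 * y.2 + x.2 * y.1 + x.2 * y.2).

Lemma qtau_mulA : associative qtau_mul.
Proof. by move=> [? ?] [? ?] [? ?]; congr pair; rewrite /=; ring. Qed.

Lemma qtau_mulC : commutative qtau_mul.
Proof. by move=> [? ?] [? ?]; congr pair; rewrite /=; ring. Qed.

Lemma qtau_mul1 : left_id (1, 0) qtau_mul.
Proof. by move=> [? ?]; congr pair; rewrite /=; ring. Qed.

Lemma qtau_mulDl : left_distributive qtau_mul +%R.
Proof. by move=> [? ?] [? ?] [? ?]; congr pair; rewrite /=; ring. Qed.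

HB.instance Definition _ := GRing.Zmodule_isComNzRing.Build qtau
  qtau_mulA qtau_mulC qtau_mul1 qtau_mulDl (isT : (1, 0) != 0 :> qtau).

Section GoldenEval.
Variables (F : numFieldType) (t : F).

Definition qtau_eval (x : qtau) : F := ratr x.1 + ratr x.2 * t.

Lemma qtau_eval_is_zmod_morphism : zmod_morphism qtau_eval.
Proof. by move=> [a b] [c d]; rewrite /qtau_eval /= !rmorphB /=; ring. Qed.

HB.instance Definition _ := GRing.isZmodMorphism.Build qtau F qtau_eval
  qtau_eval_is_zmod_morphism.

Lemma qtau_eval_is_monoid_morphism : t ^+ 2 = t + 1 -> monoid_morphism qtau_eval.
Proof.
move=> golden_t; split=> [|[a b] [c d]].
  by rewrite /qtau_eval /= rmorph0 rmorph1 mul0r addr0.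
rewrite /qtau_eval /= !rmorphD !rmorphM /=.
have -> : ratr a * ratr c + ratr b * ratr d
            + (ratr a * ratr d + ratr b * ratr c + ratr b * ratr d) * t
          = (ratr a + ratr b * t) * (ratr c + ratr d * t)
            + ratr b * ratr d * (t + 1 - t ^+ 2) :> F by ring.
by rewrite golden_t subrr mulr0 addr0.
Qed.

End GoldenEval.

Definition qa1 : cl qtau := cl_vec 0 1 0.
Definition qa2 : cl qtau := cl_vec (0, - 2^-1) (- 2^-1, 0) (2^-1, - 2^-1).
Definition qa3 : cl qtau := cl_vec 1 0 0.
Definition qaH3 (i : 'I_3) : cl qtau := tnth [tuple qa1; qa2; qa3] i.

Definition qword (w : seq ('I_3 * 'I_3)) : cl qtau :=
  foldr (fun p x => qaH3 p.1 *c qaH3 p.2 *c x) (cl_one qtau) w.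

Lemma sqr_tau (R : rcfType) : tau R ^+ 2 = tau R + 1.
Proof.
rewrite /tau; set s := Num.sqrt 5.
have -> : ((1 + s) / 2) ^+ 2 = (1 + s) / 2 + 1 + (s ^+ 2 - 5) / 4 by field.
by rewrite sqr_sqrtr ?ler0n // subrr mul0r addr0.
Qed.

HB.instance Definition _ (R : rcfType) := GRing.isMonoidMorphism.Build qtau R
  (qtau_eval (tau R)) (qtau_eval_is_monoid_morphism (sqr_tau R)).

Definition cartan_entry (R : pzRingType) (adj : rel 'I_4) (c : R) (i j : 'I_4) : R :=
  if i == j then 2 else if adj i j then c else 0.

Definition cartan_pattern (R : pzRingType) (adj : rel 'I_4) (c : R) : 'M[R]_4 :=
  \matrix_(i, j) cartan_entry adj c i j.

Lemma rmorph_cartan_entry (R S : pzRingType) (f : {rmorphism R -> S}) adj c i j :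
  f (cartan_entry adj c i j) = cartan_entry adj (f c) i j.
Proof.
by rewrite /cartan_entry; case: ifP => _; [|case: ifP => _]; rewrite ?rmorph_nat ?rmorph0.
Qed.

Definition adj_A2A2 : rel 'I_4 := fun i j =>
  [|| (i == 0 :> nat) && (j == 1 :> nat), (i == 1 :> nat) && (j == 0 :> nat),
      (i == 2 :> nat) && (j == 3 :> nat) | (i == 3 :> nat) && (j == 2 :> nat)].

Definition adj_A4 : rel 'I_4 := fun i j => (i.+1 == j :> nat) || (j.+1 == i :> nat).

(* [enum 'I_4] and [#|_|] do not reduce under vm_compute (opaque [idP],
   locked [card]), hence the explicit list. *)
Definition ords4 : seq 'I_4 := [:: 0; 1; 2; 3].

Lemma mem_ords4 (i : 'I_4) : i \in ords4.
Proof. by case: i => [[|[|[|[|//]]]] ?]. Qed.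

Definition qfour (x0 x1 x2 x3 : cl qtau) : 'I_4 -> cl qtau :=
  tnth [tuple x0; x1; x2; x3].

Section RealSpinors.
Variable R : rcfType.
Local Notation ev := (qtau_eval (tau R)).

Lemma map_qa1 : map_cl ev qa1 = a1 R.
Proof. by rewrite /map_cl /= rmorph0 rmorph1. Qed.

Lemma map_qa2 : map_cl ev qa2 = a2 R.
Proof.
rewrite /map_cl /qtau_eval /= !(rmorph0, rmorphN, rmorphV, ratr_nat) ?unitfE ?pnatr_eq0 //.
by congr Cl; rewrite /tau; field.
Qed.

Lemma map_qa3 : map_cl ev qa3 = a3 R.
Proof. by rewrite /map_cl /= rmorph0 rmorph1. Qed.

Lemma map_qI : map_cl ev (cl_I qtau) = cl_I R.
Proof. by rewrite /map_cl /= rmorph0 rmorph1. Qed.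

Lemma map_qaH3 i : map_cl ev (qaH3 i) = aH3 R i.
Proof.
by case: i => [[|[|[|//]]] ?]; rewrite /qaH3 /aH3 /tnth /= ?map_qa1 ?map_qa2 ?map_qa3.
Qed.

Lemma in2I_qword w : in2I (map_cl ev (qword w)).
Proof.
elim: w => [|[i j] w IH] /=; first by rewrite map_cl1; constructor.
by rewrite !map_clM !map_qaH3; constructor.
Qed.

Lemma in2I_mul (x y : cl R) : in2I x -> in2I y -> in2I (x *c y).
Proof.
elim=> [|i j x' _ IH] hy; first by rewrite cl_mul1r.
by rewrite -cl_mulA; constructor; apply: IH.
Qed.

Lemma cl_rev_aH3 i : cl_rev (aH3 R i) = aH3 R i.
Proof. by case: i => [[|[|[|//]]] ?]; rewrite /aH3 /tnth /= cl_rev_vec. Qed.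

Lemma in2I_rev (x : cl R) : in2I x -> in2I (cl_rev x).
Proof.
elim=> [|i j x' _ IH]; first by rewrite /cl_rev /= oppr0; constructor.
rewrite !cl_revM !cl_rev_aH3; apply: in2I_mul => //.
by rewrite -[aH3 R j *c _]cl_mulr1; do 2 constructor.
Qed.

Lemma in2I_N1 : in2I (cl_opp (cl_one R)).
Proof.
have e2e1_sqr : qword [:: (0, 2); (0, 2)] = cl_opp (cl_one qtau).
  by apply/eqP; vm_compute.
by rewrite -(map_cl1 ev) -map_clN -e2e1_sqr; apply: in2I_qword.
Qed.

Lemma in2I_srefl (r x : cl R) : in2I r -> in2I x -> in2I (srefl r x).
Proof.
move=> hr hx; rewrite /srefl -cl_mulN1r.
by apply: in2I_mul; [exact: in2I_N1 | do 2 apply: in2I_mul => //; exact: in2I_rev].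
Qed.

Lemma gen_roots_in2I (b : 'I_4 -> cl R) :
  (forall i, in2I (b i)) -> forall x, gen_roots b x -> in2I x.
Proof. by move=> hb x; elim=> [//|i y _]; apply: in2I_srefl. Qed.

Lemma spinor_ipE (x y : cl R) : spinor_ip x y = cl_dot2 x y / 2.
Proof. by rewrite /spinor_ip /cl_dot2 -mulrDl. Qed.

Lemma cartan_unit_norm (b : 'I_4 -> cl R) : (forall i, cl_dot2 (b i) (b i) = 2) ->
  cartan b = \matrix_(i, j) cl_dot2 (b i) (b j).
Proof.
move=> b_unit; apply/matrixP=> i j; rewrite !mxE !spinor_ipE b_unit divff ?pnatr_eq0 //.
by rewrite divr1 mulrC divfK ?pnatr_eq0.
Qed.

Lemma four_map_cl x0 x1 x2 x3 i :
  four (map_cl ev x0) (map_cl ev x1) (map_cl ev x2) (map_cl ev x3) i =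
  map_cl ev (qfour x0 x1 x2 x3 i).
Proof. by case: i => [[|[|[|[|//]]]] ?]. Qed.

Lemma simple_system_in_2I_certificate (x0 x1 x2 x3 : cl qtau)
    (ws : 4.-tuple (seq ('I_3 * 'I_3))) (adj : rel 'I_4) (c : qtau) :
  all (fun i => all (fun j =>
    cl_dot2 (qfour x0 x1 x2 x3 i) (qfour x0 x1 x2 x3 j) == cartan_entry adj c i j)
    ords4) ords4 ->
  all (fun i => qfour x0 x1 x2 x3 i == qword (tnth ws i)) ords4 ->
  simple_system_in_2I (four (map_cl ev x0) (map_cl ev x1) (map_cl ev x2) (map_cl ev x3))
    (cartan_pattern adj (ev c)).
Proof.
move=> /allP dotE /allP wordE.
set b := four _ _ _ _.
have dotbE i j : cl_dot2 (b i) (b j) = cartan_entry adj (ev c) i j.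
  rewrite /b !four_map_cl -map_cl_dot2 -rmorph_cartan_entry.
  by rewrite (eqP (allP (dotE i (mem_ords4 i)) j (mem_ords4 j))).
split; last first.
  apply: gen_roots_in2I => i.
  by rewrite /b four_map_cl (eqP (wordE i (mem_ords4 i))); apply: in2I_qword.
exists 1%g; rewrite cartan_unit_norm => [|i]; last by rewrite perm1 dotbE /cartan_entry eqxx.
by apply/matrixP=> i j; rewrite !mxE !perm1 dotbE.
Qed.

Lemma cartan_A2A2_pattern : cartan_A2A2 R = cartan_pattern adj_A2A2 (ev (-1)).
Proof. by rewrite rmorphN1. Qed.

Lemma cartan_H2H2_pattern : cartan_H2H2 R = cartan_pattern adj_A2A2 (ev (0, -1)).
Proof. by rewrite /qtau_eval /= rmorph0 rmorphN1 add0r mulN1r. Qed.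

Lemma cartan_A4_pattern : cartan_A4 R = cartan_pattern adj_A4 (ev (-1)).
Proof. by rewrite rmorphN1. Qed.

End RealSpinors.

Theorem mainTheorem5 (R : rcfType) :
  (* (i) type A2 + A2 *)
  simple_system_in_2I
    (four (a1 R *c a1 R) (a1 R *c a2 R) (a1 R *c cl_I R) (a2 R *c cl_I R))
    (cartan_A2A2 R) /\
  (* (ii) type H2 + H2 *)
  simple_system_in_2I
    (four (a1 R *c a1 R) (a2 R *c a3 R) (a2 R *c cl_I R) (a3 R *c cl_I R))
    (cartan_H2H2 R) /\
  (* (iii) type A4 *)
  simple_system_in_2I
    (four (a1 R *c a1 R) (a1 R *c a2 R)
       (a1 R *c a3 R *c a2 R *c a1 R *c a3 R *c a2 R *c a1 R *c a3 R)
       (a3 R *c a2 R *c a1 R *c a3 R *c a2 R *c a1 R *c a3 R *c a2 R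
          *c a3 R *c a1 R *c a2 R *c a3 R))
    (cartan_A4 R).
Proof.
rewrite cartan_A2A2_pattern cartan_H2H2_pattern cartan_A4_pattern.
rewrite -map_qa1 -map_qa2 -map_qa3 -map_qI -!(map_clM (qtau_eval (tau R))).
split; [|split].
- apply: (simple_system_in_2I_certificate R (ws := [tuple [::]; [:: (0, 1)];
    [:: (2, 1); (0, 2); (1, 2); (0, 1); (0, 2); (1, 2); (0, 1)];
    [:: (0, 2); (1, 2); (0, 1); (0, 2); (1, 2); (0, 1); (0, 2)]])); by vm_compute.
- apply: (simple_system_in_2I_certificate R (ws := [tuple [::]; [:: (1, 2)];
    [:: (0, 2); (1, 2); (0, 1); (0, 2); (1, 2); (0, 1); (0, 2)];
    [:: (0, 1); (2, 0); (1, 2); (0, 1); (0, 2); (1, 2); (0, 1)]])); by vm_compute.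
- apply: (simple_system_in_2I_certificate R (ws := [tuple [::]; [:: (0, 1)];
    [:: (2, 0); (1, 2); (0, 1); (0, 2)];
    [:: (2, 1); (0, 2); (1, 2); (0, 1); (0, 2); (1, 2)]])); by vm_compute.
Qed.
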